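(* Let $G$ be a finite group, $R\subseteq\mathbb{R}^G$ the space of real matrix coefficients $R_\rho$ of some self-conjugate representation $\rho$ of $G$, and $W=(A,B,C)$, $A,B,C\in\mathbb{R}^{m\times G}$. Suppose $\{1,\dots,m\}=S_1\sqcup S_2$ such that for $i\in S_1$ the $i$-th rows of $A,B,C$ lie in $R$ and for $i\in S_2$ the $i$-th rows of $A,B,C$ lie in $R^\perp$. Then for every $\eta>0$ the same property (with the same $S_1,S_2$) holds for $\mathrm{GD}(W)$, and hence for $\mathrm{GD}^t(W)$ for all $t\ge0$.
   Context: A representation is a homomorphism $\rho:G\to GL(\mathbb{C}^d)$; it is self-conjugate if isomorphic to its entrywise conjugate. For such $\rho$, $R_\rho\subseteq\mathbb{R}^G$ is the real span of the real and imaginary parts of the functions $g\mapsto\rho(g)_{ij}$, $i,j\in[d]$. $R^\perp$ is the orthogonal complement in $\mathbb{R}^G$ with the standard inner product. The Hadamard model computes $f_{\mathrm{HD}}(x,y;W)=C^T(Ax\odot By)$ ($\odot$ entrywise product); $1_g$ is the indicator vector of $g$; the loss is $L(W)=\frac{1}{|G|^3}\sum_{a,b\in G}\|f_{\mathrm{HD}}(1_a,1_b;W)-1_{ab}\|_2^2$, and $\mathrm{GD}(W)=W-\eta\nabla_WL(W)$ with $\mathrm{GD}^t$ its $t$-fold iterate. *)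

From HB Require Import structures.
From mathcomp Require Import all_boot all_order all_algebra all_fingroup.
From mathcomp Require Import mxrepresentation.
From mathcomp Require Import all_classical all_reals all_analysis.
From mathcomp Require Import complex.
Set Implicit Arguments. Unset Strict Implicit. Unset Printing Implicit Defensive.
Import Order.TTheory GRing.Theory Num.Theory.
Local Open Scope ring_scope.

Section Defs.
Variables (R : realType) (gT : finGroupType).

(* self-conjugate: isomorphic to its entrywise conjugate, i.e. there is an
   invertible P with P rho(g) P^-1 = conj(rho(g)) for all g. *)
Definition self_conjugate d (rho : mx_representation (complex R) [set: gT]%G d) :=
  exists2 P : 'M[complex R]_d, P \in unitmx &
    forall g : gT, P *m rho g = map_mx (@Num.conj _) (rho g) *m P.

Definition in_Rrho d (rho : mx_representation (complex R) [set: gT]%G d)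
    (v : gT -> R) :=
  exists (c c' : 'I_d -> 'I_d -> R), forall g : gT,
    v g = \sum_(i < d) \sum_(j < d)
            (c i j * complex.Re (rho g i j) + c' i j * complex.Im (rho g i j)).

Definition in_Rrho_perp d (rho : mx_representation (complex R) [set: gT]%G d)
    (v : gT -> R) :=
  forall u, in_Rrho rho u -> \sum_(g : gT) u g * v g = 0.

(* Weights W = (A,B,C), A,B,C in R^{m x G}, packed as W k for k : 'I_3
   (k = 0 : A, k = 1 : B, k = 2 : C); W k i g is the (i,g) entry. *)
Definition weights m := 'I_3 -> 'I_m -> gT -> R.

Definition wA m (W : weights m) := W ord0.
Definition wB m (W : weights m) := W (lift ord0 ord0).
Definition wC m (W : weights m) := W ord_max.

Definition fHD m (W : weights m) (x y : gT -> R) : gT -> R :=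
  fun g => \sum_(i < m) wC W i g *
     ((\sum_(h : gT) wA W i h * x h) * (\sum_(h : gT) wB W i h * y h)).

Definition indic (a : gT) : gT -> R := fun g => (g == a)%:R.

Definition loss m (W : weights m) : R :=
  (#|gT|%:R ^+ 3)^-1 * \sum_(a : gT) \sum_(b : gT)
     \sum_(g : gT) (fHD W (indic a) (indic b) g - indic (a * b)%g g) ^+ 2.

Definition bump m (W : weights m) k i g (t : R) : weights m :=
  fun k' i' g' => W k' i' g' + (if [&& k' == k, i' == i & g' == g] then t else 0).

Definition gradL m (W : weights m) : weights m :=
  fun k i g => derive1 (fun t => loss (bump W k i g t)) 0.

Definition GD m (eta : R) (W : weights m) : weights m :=
  fun k i g => W k i g - eta * gradL W k i g.

Definition rows_split d (rho : mx_representation (complex R) [set: gT]%G d)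
    m (S1 : {set 'I_m}) (W : weights m) :=
  forall k : 'I_3, forall i : 'I_m,
    (i \in S1 -> in_Rrho rho (W k i)) /\
    (i \notin S1 -> in_Rrho_perp rho (W k i)).

End Defs.

From Pilot Require Import Defs.
From mathcomp Require Import all_boot all_order all_algebra all_fingroup.
From mathcomp Require Import mxrepresentation.
From mathcomp Require Import all_classical all_reals all_analysis.
From mathcomp Require Import complex.
From mathcomp Require Import ring.
Set Implicit Arguments. Unset Strict Implicit. Unset Printing Implicit Defensive.
Import GRing.Theory.
Local Open Scope ring_scope.

(* The derivative of L with respect to the i-th row of A is a linear
   combination of the rows A_j, with coefficients <B_j, B_i> <C_j, C_i>, minus
   a combination of right translates g |-> C_i (g b) of C_i; symmetrically for
   B (left translates of C_i) and for C (left translates of B_i).  Both R_rho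
   and its orthogonal complement are closed under linear combinations and under
   left and right translations, the former because rho (g h) = rho g rho h.
   Finally, if row i and row j lie on different sides of the split, the
   coefficient <., .> <., .> vanishes, so a gradient step keeps every row on
   its side. *)

Section TranslationInvariance.
Variables (R : realType) (gT : finGroupType).
Implicit Types (P : (gT -> R) -> Prop) (u v : gT -> R).

Definition lincomb_closed P := forall (I : finType) (c : I -> R) (u : I -> gT -> R),
  (forall x, P (u x)) -> P (fun g => \sum_x c x * u x g).

Definition rtrans_closed P := forall v h, P v -> P (fun g => v (g * h)%g).

Definition ltrans_closed P := forall v h, P v -> P (fun g => v (h * g)%g).

Definition dotp u v := \sum_g u g * v g.

Definition orthocomp P v := forall u, P u -> dotp u v = 0.

Lemma dotpC u v : dotp u v = dotp v u.
Proof. by apply: eq_bigr => g _; rewrite mulrC. Qed.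

Lemma orthocomp_lincomb P : lincomb_closed (orthocomp P).
Proof.
move=> I c u Pu w Pw; rewrite /dotp.
under eq_bigr => g _ do rewrite mulr_sumr.
rewrite exchange_big big1 // => x _.
under eq_bigr => g _ do rewrite mulrCA.
by rewrite -mulr_sumr [X in _ * X]Pu ?mulr0.
Qed.

Lemma orthocomp_rtrans P : rtrans_closed P -> rtrans_closed (orthocomp P).
Proof.
move=> Prt v h Pv u Pu; rewrite /dotp (reindex_inj (mulIg h^-1%g)) /=.
under eq_bigr => g _ do rewrite mulgKV.
exact/Pv/Prt.
Qed.

Lemma orthocomp_ltrans P : ltrans_closed P -> ltrans_closed (orthocomp P).
Proof.
move=> Plt v h Pv u Pu; rewrite /dotp (reindex_inj (mulgI h^-1%g)) /=.
under eq_bigr => g _ do rewrite mulKVg.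
exact/Pv/Plt.
Qed.

Section LinearCombinations.
Variables (P : (gT -> R) -> Prop) (P_lincomb : lincomb_closed P).

Lemma closed_eqfun {u v} : P u -> u =1 v -> P v.
Proof. by move=> Pu /funext <-. Qed.

Lemma lincomb_closed0 : P (fun _ => 0).
Proof.
apply: (closed_eqfun (@P_lincomb _ (fun _ : 'I_0 => 0) (fun _ _ => 0) _)).
  by case.
by move=> g; rewrite big_ord0.
Qed.

Lemma lincomb_closed_supp (I : finType) (c : I -> R) (u : I -> gT -> R) :
  (forall x, c x = 0 \/ P (u x)) -> P (fun g => \sum_x c x * u x g).
Proof.
move=> Pu; pose u' x := if c x == 0 then fun _ => 0 else u x.
apply: (closed_eqfun (@P_lincomb _ c u' _)) => [x | g].
  rewrite /u'; case: eqP => [_ | cx]; first exact: lincomb_closed0.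
  by case: (Pu x) => // /cx.
by apply: eq_bigr => x _; rewrite /u'; case: eqP => [-> | //]; rewrite !mul0r.
Qed.

Lemma lincomb_closed2 (a b : R) u v : P u -> P v -> P (fun g => a * u g + b * v g).
Proof.
move=> Pu Pv; pose c (x : bool) := if x then a else b.
apply: (closed_eqfun (@P_lincomb _ c (fun x => if x then u else v) _)) => [[] // | g].
by rewrite big_bool.
Qed.

End LinearCombinations.
End TranslationInvariance.

Section MatrixCoefficients.
Variables (R : realType) (gT : finGroupType) (d : nat)
  (rho : mx_representation (complex R) [set: gT]%G d).

Local Notation Re := (@complex.Re R).
Local Notation Im := (@complex.Im R).

Lemma Re_sum (I : finType) (F : I -> complex R) : Re (\sum_i F i) = \sum_i Re (F i).
Proof. exact: (@raddf_sum _ _ (Re : Rcomplex R -> R)). Qed.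

Lemma Re_mul (z w : complex R) : Re (z * w) = Re z * Re w - Im z * Im w.
Proof. by case: z; case: w. Qed.

Lemma Re_realM (r : R) (z : complex R) : Re ((r +i* 0)%C * z) = r * Re z.
Proof. by rewrite Re_mul /= mul0r subr0. Qed.

(* Since Re (z rho_ij) = Re z Re rho_ij - Im z Im rho_ij, the real span of the
   Re rho_ij and Im rho_ij is the set of real parts of complex combinations. *)
Definition mx_coef (z : 'I_d -> 'I_d -> complex R) (g : gT) :=
  Re (\sum_i \sum_j z i j * rho g i j).

Lemma in_RrhoE v : in_Rrho rho v <-> exists z, v =1 mx_coef z.
Proof.
split=> [[c [c' v_def]] | [z v_def]].
  exists (fun i j => (c i j +i* - c' i j)%C) => g.
  rewrite v_def /mx_coef Re_sum; apply: eq_bigr => i _.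
  by rewrite Re_sum; apply: eq_bigr => j _; rewrite Re_mul /= mulNr opprK.
exists (fun i j => Re (z i j)), (fun i j => - Im (z i j)) => g.
rewrite v_def /mx_coef Re_sum; apply: eq_bigr => i _.
by rewrite Re_sum; apply: eq_bigr => j _; rewrite Re_mul mulNr.
Qed.

Lemma mx_coef_lincomb (I : finType) (c : I -> R) z g :
  \sum_x c x * mx_coef (z x) g = mx_coef (fun i j => \sum_x (c x +i* 0)%C * z x i j) g.
Proof.
rewrite /mx_coef; under eq_bigr => x _ do rewrite -Re_realM.
rewrite -Re_sum; congr Re.
under eq_bigr => x _ do rewrite mulr_sumr.
rewrite exchange_big; apply: eq_bigr => i _.
under eq_bigr => x _ do rewrite mulr_sumr.
rewrite exchange_big; apply: eq_bigr => j _.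
by rewrite mulr_suml; apply: eq_bigr => x _; rewrite mulrA.
Qed.

Lemma rho_mulE g h i j : rho (g * h)%g i j = \sum_k rho g i k * rho h k j.
Proof. by rewrite repr_mxM ?inE // mxE. Qed.

Lemma mx_coef_mulg_r z h g :
  mx_coef z (g * h)%g = mx_coef (fun i k => \sum_j z i j * rho h k j) g.
Proof.
rewrite /mx_coef; congr Re; apply: eq_bigr => i _.
under eq_bigr => j _ do rewrite rho_mulE mulr_sumr.
rewrite exchange_big; apply: eq_bigr => k _.
by rewrite mulr_suml; apply: eq_bigr => j _; ring.
Qed.

Lemma mx_coef_mulg_l z h g :
  mx_coef z (h * g)%g = mx_coef (fun k j => \sum_i z i j * rho h i k) g.
Proof.
rewrite /mx_coef; congr Re.
under eq_bigr => i _ do under eq_bigr => j _ do rewrite rho_mulE mulr_sumr.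
under eq_bigr => i _ do rewrite exchange_big.
rewrite exchange_big; apply: eq_bigr => k _.
rewrite exchange_big; apply: eq_bigr => j _.
by rewrite mulr_suml; apply: eq_bigr => i _; rewrite mulrA.
Qed.

Lemma in_Rrho_lincomb : lincomb_closed (in_Rrho rho).
Proof.
move=> I c u /(_ _)/in_RrhoE Pu; apply/in_RrhoE.
have [z u_def] := fin_all_exists Pu.
exists (fun i j => \sum_x (c x +i* 0)%C * z x i j) => g.
by rewrite -mx_coef_lincomb; apply: eq_bigr => x _; rewrite u_def.
Qed.

Lemma in_Rrho_rtrans : rtrans_closed (in_Rrho rho).
Proof.
move=> v h /in_RrhoE[z v_def]; apply/in_RrhoE.
by eexists => g; rewrite v_def mx_coef_mulg_r.
Qed.

Lemma in_Rrho_ltrans : ltrans_closed (in_Rrho rho).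
Proof.
move=> v h /in_RrhoE[z v_def]; apply/in_RrhoE.
by eexists => g; rewrite v_def mx_coef_mulg_l.
Qed.

End MatrixCoefficients.

Lemma derive1_quadratic (R : realType) (a b c : R) :
  derive1 (fun t : R => a + t * b + t ^+ 2 * c) 0 = b.
Proof.
have -> : (fun t : R => a + t * b + t ^+ 2 * c) = horner (a%:P + 'X * b%:P + 'X^2 * c%:P).
  by apply/funext => t /=; rewrite !(hornerD, hornerM, hornerX, hornerC, hornerXn).
by rewrite -derivE !(derivD, derivM, derivC, derivX, derivXn) !hornerE /= !addr0.
Qed.

Lemma sumr_comb3 (R : realType) (I : finType) (x y z : I -> R) (a b : R) :
  \sum_s (x s + a * y s + b * z s) = \sum_s x s + a * \sum_s y s + b * \sum_s z s.
Proof. by rewrite !big_split /= -!mulr_sumr. Qed.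

Lemma sum_delta_mull (R : realType) (I : finType) (y : I) (F : I -> R) :
  \sum_x (x == y)%:R * F x = F y.
Proof.
rewrite (bigD1 y) //= eqxx mul1r big1 ?addr0 // => x /negbTE ->.
by rewrite mul0r.
Qed.

Lemma ord3_cases (k : 'I_3) : k = ord0 \/ k = lift ord0 ord0 \/ k = ord_max.
Proof.
by case: k => [[|[|[|//]]] lt_k3]; [left | right; left | right; right]; apply/val_inj.
Qed.

Section Gradient.
Variables (R : realType) (gT : finGroupType) (m : nat).
Implicit Types (W : weights R gT m).
Local Notation ind := (Defs.indic R).

Lemma fHD_indic W a b c :
  fHD W (ind a) (ind b) c = \sum_j wA W j a * wB W j b * wC W j c.
Proof.
apply: eq_bigr => j _; rewrite /Defs.indic.
under eq_bigr => h _ do rewrite mulrC; rewrite sum_delta_mull.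
under eq_bigr => h _ do rewrite mulrC; rewrite sum_delta_mull.
by rewrite mulrC.
Qed.

Definition residual W a b c := fHD W (ind a) (ind b) c - ind (a * b)%g c.

Lemma sum_residual_mul W (Q : gT -> gT -> gT -> R) :
  \sum_a \sum_b \sum_c residual W a b c * Q a b c =
  \sum_j \sum_a \sum_b \sum_c wA W j a * wB W j b * wC W j c * Q a b c
  - \sum_a \sum_b Q a b (a * b)%g.
Proof.
have expand a b c : residual W a b c * Q a b c =
    \sum_j wA W j a * wB W j b * wC W j c * Q a b c - ind (a * b)%g c * Q a b c.
  by rewrite /residual fHD_indic mulrBl mulr_suml.
under eq_bigr => a _ do under eq_bigr => b _ do
  (under eq_bigr => c _ do rewrite expand; rewrite sumrB).
under eq_bigr => a _ do rewrite sumrB.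
rewrite sumrB; congr (_ - _).
  under eq_bigr => a _ do under eq_bigr => b _ do rewrite exchange_big.
  under eq_bigr => a _ do rewrite exchange_big.
  by rewrite exchange_big.
by do 2!apply: eq_bigr => ? _; rewrite sum_delta_mull.
Qed.

Lemma gradL_linear_perturbation W k i g (Q : gT -> gT -> gT -> R) :
  (forall t a b c, fHD (Defs.bump W k i g t) (ind a) (ind b) c =
                   fHD W (ind a) (ind b) c + t * Q a b c) ->
  gradL W k i g = 2 * (#|gT|%:R ^+ 3)^-1 *
    \sum_a \sum_b \sum_c residual W a b c * Q a b c.
Proof.
move=> fHD_bump; rewrite /gradL.
(* The perturbed loss is a quadratic polynomial in t. *)
set s := (#|gT|%:R ^+ 3)^-1; set r := residual W.
have -> : (fun t => loss (Defs.bump W k i g t)) = fun t =>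
    s * \sum_a \sum_b \sum_c r a b c ^+ 2 +
    t * (2 * s * \sum_a \sum_b \sum_c r a b c * Q a b c) +
    t ^+ 2 * (s * \sum_a \sum_b \sum_c Q a b c ^+ 2).
  apply/funext => t; rewrite /loss -/s.
  have r_bump a b c :
      (fHD (Defs.bump W k i g t) (ind a) (ind b) c - ind (a * b)%g c) ^+ 2 =
      r a b c ^+ 2 + (2 * t) * (r a b c * Q a b c) + t ^+ 2 * Q a b c ^+ 2.
    by rewrite fHD_bump /r /residual; ring.
  under eq_bigr => a _ do under eq_bigr => b _ do
    (under eq_bigr => c _ do rewrite r_bump; rewrite sumr_comb3).
  under eq_bigr => a _ do rewrite sumr_comb3.
  by rewrite sumr_comb3; ring.
exact: derive1_quadratic.
Qed.

Lemma bumpE W k i g t k' j a :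
  Defs.bump W k i g t k' j a =
  W k' j a + (k' == k)%:R * ((j == i)%:R * ((a == g)%:R * t)).
Proof.
rewrite /Defs.bump; case: eqP => _; last by rewrite mul0r addr0.
case: eqP => _; last by rewrite mul1r mul0r addr0.
by case: eqP => _; rewrite ?mul1r ?mul0r ?addr0.
Qed.

Lemma fHD_bump_A W i g t a b c :
  fHD (Defs.bump W ord0 i g t) (ind a) (ind b) c =
  fHD W (ind a) (ind b) c + t * ((a == g)%:R * (wB W i b * wC W i c)).
Proof.
rewrite !fHD_indic /wA /wB /wC.
under eq_bigr => j _ do rewrite !bumpE /= !mul0r !addr0 mul1r !mulrDl.
rewrite big_split /=; congr (_ + _).
rewrite (bigD1 i) //= big1 => [|j /negbTE ->]; last by rewrite !(mul0r, mulr0).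
by rewrite eqxx addr0 /=; ring.
Qed.

Lemma fHD_bump_B W i g t a b c :
  fHD (Defs.bump W (lift ord0 ord0) i g t) (ind a) (ind b) c =
  fHD W (ind a) (ind b) c + t * ((b == g)%:R * (wA W i a * wC W i c)).
Proof.
rewrite !fHD_indic /wA /wB /wC.
under eq_bigr => j _ do rewrite !bumpE /= !mul0r !addr0 mul1r mulrDr !mulrDl.
rewrite big_split /=; congr (_ + _).
rewrite (bigD1 i) //= big1 => [|j /negbTE ->]; last by rewrite !(mul0r, mulr0).
by rewrite eqxx addr0 /=; ring.
Qed.

Lemma fHD_bump_C W i g t a b c :
  fHD (Defs.bump W ord_max i g t) (ind a) (ind b) c =
  fHD W (ind a) (ind b) c + t * ((c == g)%:R * (wA W i a * wB W i b)).
Proof.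
rewrite !fHD_indic /wA /wB /wC.
under eq_bigr => j _ do rewrite !bumpE /= !mul0r !addr0 mul1r mulrDr.
rewrite big_split /=; congr (_ + _).
rewrite (bigD1 i) //= big1 => [|j /negbTE ->]; last by rewrite !(mul0r, mulr0).
by rewrite eqxx addr0 /=; ring.
Qed.

Lemma gradL_A W i g :
  gradL W ord0 i g = 2 * (#|gT|%:R ^+ 3)^-1 *
    (\sum_j dotp (wB W j) (wB W i) * dotp (wC W j) (wC W i) * wA W j g
     - \sum_b wB W i b * wC W i (g * b)%g).
Proof.
rewrite (gradL_linear_perturbation (fHD_bump_A W i g)) sum_residual_mul.
congr (_ * (_ - _)).
  apply: eq_bigr => j _; rewrite -(sum_delta_mull g (fun a => _ * wA W j a)).
  apply: eq_bigr => a _.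
  rewrite /dotp big_distrlr /= mulr_suml mulr_sumr; apply: eq_bigr => b _.
  by rewrite mulr_suml mulr_sumr; apply: eq_bigr => c _; ring.
by under eq_bigr => a _ do rewrite -mulr_sumr; rewrite sum_delta_mull.
Qed.

Lemma gradL_B W i g :
  gradL W (lift ord0 ord0) i g = 2 * (#|gT|%:R ^+ 3)^-1 *
    (\sum_j dotp (wA W j) (wA W i) * dotp (wC W j) (wC W i) * wB W j g
     - \sum_a wA W i a * wC W i (a * g)%g).
Proof.
rewrite (gradL_linear_perturbation (fHD_bump_B W i g)) sum_residual_mul.
congr (_ * (_ - _)).
  apply: eq_bigr => j _; rewrite exchange_big -(sum_delta_mull g (fun b => _ * wB W j b)).
  apply: eq_bigr => b _.
  rewrite /dotp big_distrlr /= mulr_suml mulr_sumr; apply: eq_bigr => a _.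
  by rewrite mulr_suml mulr_sumr; apply: eq_bigr => c _; ring.
by apply: eq_bigr => a _; rewrite sum_delta_mull.
Qed.

Lemma gradL_C W i g :
  gradL W ord_max i g = 2 * (#|gT|%:R ^+ 3)^-1 *
    (\sum_j dotp (wA W j) (wA W i) * dotp (wB W j) (wB W i) * wC W j g
     - \sum_a wA W i a * wB W i (a^-1 * g)%g).
Proof.
rewrite (gradL_linear_perturbation (fHD_bump_C W i g)) sum_residual_mul.
congr (_ * (_ - _)).
  apply: eq_bigr => j _; under eq_bigr => a _ do rewrite exchange_big.
  rewrite exchange_big -(sum_delta_mull g (fun c => _ * wC W j c)).
  apply: eq_bigr => c _.
  rewrite /dotp big_distrlr /= mulr_suml mulr_sumr; apply: eq_bigr => a _.
  by rewrite mulr_suml mulr_sumr; apply: eq_bigr => b _; ring.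
apply: eq_bigr => a _.
by under eq_bigr => b _ do rewrite (can2_eq (mulKg a) (mulKVg a)); rewrite sum_delta_mull.
Qed.

End Gradient.

Section GradientStep.
Variables (R : realType) (gT : finGroupType) (m : nat) (P : (gT -> R) -> Prop).
Hypotheses (P_lincomb : lincomb_closed P) (P_rtrans : rtrans_closed P)
  (P_ltrans : ltrans_closed P).
Implicit Types (W : weights R gT m).

Lemma GD_row_closed W eta k i s (c : 'I_m -> R)
    (I : finType) (c' : I -> R) (u : I -> gT -> R) :
  P (W k i) -> (forall j, c j = 0 \/ P (W k j)) -> (forall x, P (u x)) ->
  (forall g, gradL W k i g = s * (\sum_j c j * W k j g - \sum_x c' x * u x g)) ->
  P (GD eta W k i).
Proof.
move=> Pi Pj Pu gradE.
have Pgrad : P (fun g => 1 * \sum_j c j * W k j g + (-1) * \sum_x c' x * u x g).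
  by apply: lincomb_closed2 => //; [exact: lincomb_closed_supp | exact: P_lincomb].
apply: (closed_eqfun (lincomb_closed2 P_lincomb 1 (- (eta * s)) Pi Pgrad)) => g.
by rewrite /GD gradE; ring.
Qed.

Lemma GD_rows_closed W eta i :
  (forall k, P (W k i)) ->
  (forall j, (forall k, P (W k j)) \/ (forall k, dotp (W k j) (W k i) = 0)) ->
  forall k, P (GD eta W k i).
Proof.
move=> Pi Pj k; have Pc k' j : dotp (W k' j) (W k' i) = 0 \/ forall k, P (W k j).
  by case: (Pj j) => [PWj | /(_ k') ->]; [right | left].
case: (ord3_cases k) => [-> | [-> | ->]].
- apply: (GD_row_closed eta (Pi _) _ _ (gradL_A W i)) => [j | b].
    by case: (Pc (lift ord0 ord0) j) => [dB0 | ?]; [left; rewrite /wB dB0 mul0r | right].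
  exact: P_rtrans (Pi ord_max).
- apply: (GD_row_closed eta (Pi _) _ _ (gradL_B W i)) => [j | a].
    by case: (Pc ord0 j) => [dA0 | ?]; [left; rewrite /wA dA0 mul0r | right].
  exact: P_ltrans (Pi ord_max).
- apply: (GD_row_closed eta (Pi _) _ _ (gradL_C W i)) => [j | a].
    by case: (Pc ord0 j) => [dA0 | ?]; [left; rewrite /wA dA0 mul0r | right].
  exact: P_ltrans (Pi (lift ord0 ord0)).
Qed.

End GradientStep.

Lemma rows_split_GD (R : realType) (gT : finGroupType) (d : nat)
    (rho : mx_representation (complex R) [set: gT]%G d)
    (m : nat) (S1 : {set 'I_m}) (W : weights R gT m) (eta : R) :
  rows_split rho S1 W -> rows_split rho S1 (GD eta W).
Proof.
move=> splitW k i.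
have Rrt := in_Rrho_rtrans (rho := rho); have Rlt := in_Rrho_ltrans (rho := rho).
split=> [iS1 | iS2].
  apply: (GD_rows_closed (in_Rrho_lincomb (rho := rho)) Rrt Rlt eta) => [k' | j].
    exact: (splitW k' i).1.
  have [jS1 | jS2] := boolP (j \in S1); [left | right] => k'; first exact: (splitW k' j).1.
  by rewrite dotpC; apply: (splitW k' j).2 => //; exact: (splitW k' i).1.
apply: (GD_rows_closed (@orthocomp_lincomb _ _ (in_Rrho rho))
         (orthocomp_rtrans Rrt) (orthocomp_ltrans Rlt) eta) => [k' | j].
  exact: (splitW k' i).2.
have [jS1 | jS2] := boolP (j \in S1); [right | left] => k'; last exact: (splitW k' j).2.
by apply: (splitW k' i).2 => //; exact: (splitW k' j).1.
Qed.

Theorem mainTheorem13 (R : realType) (gT : finGroupType) (d : nat)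
    (rho : mx_representation (complex R) [set: gT]%G d)
    (m : nat) (S1 : {set 'I_m}) (W : weights R gT m) :
  self_conjugate rho ->
  rows_split rho S1 W ->
  forall eta : R, 0 < eta ->
    rows_split rho S1 (GD eta W) /\
    (forall t : nat, rows_split rho S1 (iter t (GD eta) W)).
Proof.
move=> _ splitW eta _; split; first exact: rows_split_GD.
by elim=> [|t IHt] //=; apply: rows_split_GD.
Qed.
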